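(* Let $\Sigma=(\mathbf{x},\mathbf{F})$ be an LP seed of rank $n\ge2$ satisfying Condition 1.2. Then $$R[x_1,x_2^{\pm1},\dots,x_n^{\pm1}]\cap R[x_1^{\pm1},x_2,x'_2,\dots,x_n,x'_n]=R[x_1,x_2,x'_2,\dots,x_n,x'_n].$$
   Context: $R$ is a unique factorization domain containing $\mathbb{Z}$ and $\mathcal{F}$ is the field of rational functions in $n$ variables over $\mathrm{Frac}(R)$; all rings are subrings of $\mathcal{F}$. An LP seed of rank $n$ is a pair $(\mathbf{x},\mathbf{F})$ where $\mathbf{x}=\{x_1,\dots,x_n\}$ is a transcendence basis of $\mathcal{F}$ over $\mathrm{Frac}(R)$ and $\mathbf{F}=\{F_1,\dots,F_n\}$ are irreducible polynomials in $R[x_1,\dots,x_n]$ with $x_j\nmid F_i$ for all $i,j$ and $F_i$ not involving $x_i$. The exchange Laurent polynomial is $\hat F_j=F_j/\prod_{k\neq j}x_k^{a_k}$, with $a_k\in\mathbb{Z}_{\ge0}$ maximal such that $F_k^{a_k}$ divides $F_j|_{x_k\leftarrow F_k/x'_k}$ in $R[x_1,\dots,x_{k-1},(x'_k)^{-1},x_{k+1},\dots,x_n]$. Set $x'_j=\hat F_j/x_j$. Lexicographic order on $\mathbb{Z}^n$: $\mathbf{a}\prec\mathbf{a}'$ if the first nonzero entry of $\mathbf{a}'-\mathbf{a}$ is positive; the lexicographically first monomial of a polynomial is its term with $\prec$-smallest exponent vector. Condition 1.2: for every $k\in[1,n]$, with $M_k$ the lexicographically first monomial of $F_k$: (i) $\hat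 F_k=F_k$; (ii) $M_k=x_{k+1}^{v_{k+1,k}}\cdots x_n^{v_{n,k}}$ (coefficient $1$) with $v_{\cdot,k}\in\mathbb{Z}_{\ge0}$ for $k\in[1,n-1]$, and $M_n=1$; (iii) if $k\ne1$ and $F_k$ involves $x_1$, then every monomial of $F_k-M_k$ is divisible by $x_1$; (iv) if $k\notin\{1,2\}$, $F_k$ does not involve $x_1$, and there is $i\in[2,k-1]$ such that $x_k$ divides $M_i$, then every monomial of $F_k-M_k$ is divisible by $x_i$. *)

From HB Require Import structures.
From mathcomp Require Import all_boot all_order all_algebra.
From mathcomp Require Import fraction.
From mathcomp Require Import mpoly.

Set Implicit Arguments.
Unset Strict Implicit.
Unset Printing Implicit Defensive.

Import GRing.Theory.
Local Open Scope ring_scope.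

Definition dvdR (T : comRingType) (a b : T) : Prop := exists c, b = c * a.

Definition assocR (T : comUnitRingType) (a b : T) : Prop :=
  exists2 u, u \is a GRing.unit & a = u * b.

Definition irreducibleR (T : idomainType) (a : T) : Prop :=
  [/\ a != 0, a \isn't a GRing.unit &
      forall b c, a = b * c -> b \is a GRing.unit \/ c \is a GRing.unit].

Definition UFD (T : idomainType) : Prop :=
  (forall a : T, a != 0 -> a \isn't a GRing.unit ->
     exists s : seq T, (forall b, b \in s -> irreducibleR b) /\
                       a = \prod_(b <- s) b)
  /\
  (forall s t : seq T,
     (forall b, b \in s -> irreducibleR b) ->
     (forall b, b \in t -> irreducibleR b) ->
     \prod_(b <- s) b = \prod_(b <- t) b ->
     exists t' : seq T, [/\ perm_eq t t', size s = size t' &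
        forall i, (i < size s)%N -> assocR (nth 0 s i) (nth 0 t' i)]).

Section Poly.
Variables (n : nat) (R : idomainType).

Definition involves (p : {mpoly R[n]}) (i : 'I_n) : Prop :=
  exists2 m, m \in msupp p & (0 < m i)%N.

Definition lexlt (m m' : 'X_{1..n}) : Prop :=
  exists i : 'I_n, (forall j : 'I_n, (j < i)%N -> m j = m' j) /\ (m i < m' i)%N.

Definition lexfirst (p : {mpoly R[n]}) (m : 'X_{1..n}) : Prop :=
  m \in msupp p /\ forall m', m' \in msupp p -> m' != m -> lexlt m m'.

(* F_j |_{x_k <- F_k / x'_k}, written as a polynomial in
   x_1,..,x_{k-1},(x'_k)^{-1},x_{k+1},..,x_n where the k-th variable
   'X_k stands for (x'_k)^{-1} *)
Definition exch_subst (F : 'I_n -> {mpoly R[n]}) (j k : 'I_n) : {mpoly R[n]} :=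
  F j \mPo [tuple (if i == k then F k * 'X_i else 'X_i) | i < n].

Definition exch_exp (F : 'I_n -> {mpoly R[n]}) (j k : 'I_n) (a : nat) : Prop :=
  dvdR (F k ^+ a) (exch_subst F j k) /\ ~ dvdR (F k ^+ a.+1) (exch_subst F j k).

(* \hat F_j = F_j, i.e. all exponents a_k (k <> j) in the denominator
   monomial prod_{k<>j} x_k^{a_k} vanish *)
Definition hatF_eq_F (F : 'I_n -> {mpoly R[n]}) (j : 'I_n) : Prop :=
  forall k : 'I_n, k != j -> exch_exp F j k 0.

(* LP seed (x, F) of rank n, with x the standard variables *)
Definition LPseed (F : 'I_n -> {mpoly R[n]}) : Prop :=
  forall i : 'I_n,
    [/\ irreducibleR (F i),
        forall j : 'I_n, ~ dvdR ('X_j) (F i) &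
        ~ involves (F i) i].

(* Condition 1.2 (0-based indices: paper's x_1 is index 0) *)
Definition Condition12 (F : 'I_n -> {mpoly R[n]}) : Prop :=
  forall k : 'I_n,
    [/\ hatF_eq_F F k,
        (exists2 m, lexfirst (F k) m &
           (F k)@_m = 1 /\ forall i : 'I_n, (i <= k)%N -> m i = 0%N),
        (forall m i0, lexfirst (F k) m -> val i0 = 0%N ->
           (0 < k)%N -> involves (F k) i0 ->
           forall m', m' \in msupp (F k) -> m' != m -> (0 < m' i0)%N) &
        (forall m i0, lexfirst (F k) m -> val i0 = 0%N ->
           (1 < k)%N -> ~ involves (F k) i0 ->
           forall i : 'I_n, (1 <= i)%N -> (i < k)%N ->
           forall mi, lexfirst (F i) mi -> (0 < mi k)%N ->
           forall m', m' \in msupp (F k) -> m' != m -> (0 < m' i)%N)].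

End Poly.

Notation Kfield n R := {fraction {mpoly R%type[n]}}.

Notation "x %:F" := (@FracField.tofrac _ x) (format "x %:F").

Definition Xf (n : nat) (R : idomainType) (i : 'I_n) : Kfield n R :=
  ('X_i : {mpoly R[n]})%:F.

(* x'_j = \hat F_j / x_j ; under Condition 1.2 (i), \hat F_j = F_j *)
Definition xprime (n : nat) (R : idomainType) (F : 'I_n -> {mpoly R[n]})
  (j : 'I_n) : Kfield n R := (F j)%:F / Xf R j.

(* R[s_1, ..., s_m] inside the field: values of polynomials with
   coefficients in R at the generators *)
Definition Rgen (n : nat) (R : idomainType) (s : seq (Kfield n R))
  (f : Kfield n R) : Prop :=
  exists p : {mpoly R[size s]},
    f = mmap (fun c : R => (c%:MP : {mpoly R[n]})%:F)
             (fun i : 'I_(size s) => nth 0 s i) p.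

Definition gensA (n : nat) (R : idomainType) : seq (Kfield n R) :=
  [seq Xf R i | i <- enum 'I_n] ++
  [seq (Xf R i)^-1 | i <- enum 'I_n & (0 < val i)%N].

Definition gensB (n : nat) (R : idomainType) (F : 'I_n -> {mpoly R[n]})
  : seq (Kfield n R) :=
  [seq Xf R i | i <- enum 'I_n] ++
  [seq (Xf R i)^-1 | i <- enum 'I_n & val i == 0%N] ++
  [seq xprime F i | i <- enum 'I_n & (0 < val i)%N].

Definition gensC (n : nat) (R : idomainType) (F : 'I_n -> {mpoly R[n]})
  : seq (Kfield n R) :=
  [seq Xf R i | i <- enum 'I_n] ++
  [seq xprime F i | i <- enum 'I_n & (0 < val i)%N].

From HB Require Import structures.
From mathcomp Require Import all_boot all_order all_algebra.
From mathcomp Require Import fraction.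
From mathcomp Require Import mpoly.
From mathcomp Require Import zify ring.
Local Open Scope ring_scope.

(* Write A = R[x_1, x_2^{+-1}, ..., x_n^{+-1}] and C = R[x_1, x_2, x'_2, ..., x_n, x'_n].
   The elements of R[x_1^{+-1}, x_2, x'_2, ..., x_n, x'_n] are the g / x_1^k with g in C,
   so by induction on k it suffices to show that g in C and g / x_1 in A imply
   g / x_1 in C.  Since x_i x'_i = F_i, g is an R-combination of standard monomials
   x^a x'^b with b_1 = 0 and a_i b_i = 0 for all i.  The terms with a_1 > 0 are x_1 times
   an element of C; let g_0 be the sum of the others.  If beta bounds every b, then
   x^a x'^b x^beta = x^(a+beta-b) prod_i F_i^(b_i) is a polynomial whose lexicographically
   first monomial has coefficient 1 and does not involve x_1 (Condition 1.2 (ii)); these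
   leading monomials are pairwise distinct because the leading monomial of F_i only
   involves x_(i+1), ..., x_n.  But g_0 / x_1 in A forces all coefficients of g_0 x^beta
   at monomials free of x_1 to vanish, hence g_0 = 0.  Of the hypotheses, only
   Condition 1.2 (ii) is needed. *)

Set Implicit Arguments.
Unset Strict Implicit.
Unset Printing Implicit Defensive.
Import GRing.Theory.

Section GeneratedSubrings.
Variables (n : nat) (R : idomainType).
Local Notation K := (Kfield n R).

Definition constK : {rmorphism R -> K} := (@FracField.tofrac _) \o (@mpolyC n R).

Definition Rclosed (S : K -> Prop) :=
  [/\ forall c, S (constK c), forall x y, S x -> S y -> S (x + y) &
      forall x y, S x -> S y -> S (x * y)].

Section Closed.
Variables (S : K -> Prop) (clS : Rclosed S).

Lemma Rclosed_const c : S (constK c). Proof. by case: clS. Qed.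
Lemma RclosedD x y : S x -> S y -> S (x + y). Proof. by case: clS => _ + _; apply. Qed.
Lemma RclosedM x y : S x -> S y -> S (x * y). Proof. by case: clS => _ _; apply. Qed.
Lemma Rclosed0 : S 0. Proof. by rewrite -(rmorph0 constK); apply: Rclosed_const. Qed.
Lemma Rclosed1 : S 1. Proof. by rewrite -(rmorph1 constK); apply: Rclosed_const. Qed.

Lemma RclosedN x : S x -> S (- x).
Proof. by rewrite -mulN1r -(rmorph1 constK) -rmorphN; apply/RclosedM/Rclosed_const. Qed.

Lemma RclosedX x k : S x -> S (x ^+ k).
Proof.
move=> Sx; elim: k => [|k IH]; first by rewrite expr0; apply: Rclosed1.
by rewrite exprS; apply: RclosedM.
Qed.

Lemma Rclosed_sum (I : Type) (r : seq I) (P : pred I) (G : I -> K) :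
  (forall i, P i -> S (G i)) -> S (\sum_(i <- r | P i) G i).
Proof. by apply: big_ind; [apply: Rclosed0 | apply: RclosedD]. Qed.

Lemma Rclosed_prod (I : Type) (r : seq I) (P : pred I) (G : I -> K) :
  (forall i, P i -> S (G i)) -> S (\prod_(i <- r | P i) G i).
Proof. by apply: big_ind; [apply: Rclosed1 | apply: RclosedM]. Qed.

Lemma tofrac_mpolyE (p : {mpoly R[n]}) :
  p%:F = \sum_(m <- msupp p) constK p@_m * \prod_(i < n) Xf R i ^+ m i.
Proof.
rewrite {1}(mpolyE p) rmorph_sum; apply: eq_bigr => m _.
rewrite -mul_mpolyC rmorphM mpolyXE_id rmorph_prod; congr (_ * _).
by apply: eq_bigr => i _; rewrite rmorphXn.
Qed.

Lemma Rclosed_tofrac (p : {mpoly R[n]}) : (forall i, S (Xf R i)) -> S p%:F.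
Proof.
move=> SX; rewrite tofrac_mpolyE; apply: Rclosed_sum => m _.
by apply/RclosedM; [apply: Rclosed_const | apply: Rclosed_prod => i _; apply: RclosedX].
Qed.

End Closed.

Lemma RgenE (s : seq K) f :
  Rgen s f <-> exists p : {mpoly R[size s]}, f = mmap constK (nth 0 s) p.
Proof. by []. Qed.

Lemma Rgen_Rclosed (s : seq K) : Rclosed (Rgen s).
Proof.
split=> [c|_ _ /RgenE[p ->] /RgenE[q ->]|_ _ /RgenE[p ->] /RgenE[q ->]]; apply/RgenE.
- by exists c%:MP; rewrite mmapC.
- by exists (p + q); rewrite rmorphD.
- by exists (p * q); rewrite rmorphM.
Qed.

Lemma Rgen_mem (s : seq K) x : x \in s -> Rgen s x.
Proof.
move=> xs; have si : (index x s < size s)%N by rewrite index_mem.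
by apply/RgenE; exists 'X_(Ordinal si); rewrite mmapX mmap1U nth_index.
Qed.

Lemma Rgen_min (s : seq K) (S : K -> Prop) :
  Rclosed S -> (forall x, x \in s -> S x) -> forall f, Rgen s f -> S f.
Proof.
move=> clS Ss _ /RgenE[p ->]; apply: Rclosed_sum => // m _.
apply: RclosedM => //; first exact: Rclosed_const.
by apply: Rclosed_prod => // i _; apply: RclosedX => //; apply/Ss/mem_nth.
Qed.

End GeneratedSubrings.

Lemma mem_enum_filterP (T : finType) (U : eqType) (P : pred T) (f : T -> U) x :
  reflect (exists2 i, P i & x = f i) (x \in [seq f i | i <- enum T & P i]).
Proof.
apply: (iffP mapP) => [[i]|[i Pi ->]]; last by exists i; rewrite // mem_filter Pi mem_enum.
by rewrite mem_filter mem_enum andbT; exists i.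
Qed.

Section Generators.
Variables (n : nat) (R : idomainType) (F : 'I_n -> {mpoly R[n]}).
Local Notation K := (Kfield n R).
Local Notation X := (Xf R).
Local Notation xp := (xprime F).

Lemma mem_Xf_enum (i : 'I_n) : X i \in [seq X j | j <- enum 'I_n].
Proof. by rewrite map_f ?mem_enum. Qed.

Lemma Rgen_gensA_X i : Rgen (gensA n R) (X i).
Proof. by apply: Rgen_mem; rewrite mem_cat mem_Xf_enum. Qed.

Lemma Rgen_gensA_Xinv (i : 'I_n) : (0 < i)%N -> Rgen (gensA n R) (X i)^-1.
Proof.
move=> i_gt0; apply: Rgen_mem; rewrite mem_cat; apply/orP; right.
by apply/mem_enum_filterP; exists i.
Qed.

Lemma Rgen_gensB_X i : Rgen (gensB F) (X i).
Proof. by apply: Rgen_mem; rewrite mem_cat mem_Xf_enum. Qed.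

Lemma Rgen_gensB_xprime (i : 'I_n) : (0 < i)%N -> Rgen (gensB F) (xp i).
Proof.
move=> i_gt0; apply: Rgen_mem; rewrite !mem_cat; apply/or3P; apply: Or33.
by apply/mem_enum_filterP; exists i.
Qed.

Lemma Rgen_gensC_X i : Rgen (gensC F) (X i).
Proof. by apply: Rgen_mem; rewrite mem_cat mem_Xf_enum. Qed.

Lemma Rgen_gensC_xprime (i : 'I_n) : (0 < i)%N -> Rgen (gensC F) (xp i).
Proof.
move=> i_gt0; apply: Rgen_mem; rewrite mem_cat; apply/orP; right.
by apply/mem_enum_filterP; exists i.
Qed.

Variable S : K -> Prop.
Hypotheses (clS : Rclosed S) (SX : forall i, S (X i)).

Lemma gensA_min : (forall i : 'I_n, (0 < i)%N -> S (X i)^-1) ->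
  forall f, Rgen (gensA n R) f -> S f.
Proof.
move=> SXinv; apply: Rgen_min => // x; rewrite mem_cat.
by case/orP => [/mapP[i _ ->] | /mem_enum_filterP[i i_gt0 ->]]; auto.
Qed.

Lemma gensB_min : (forall i : 'I_n, val i = 0%N -> S (X i)^-1) ->
  (forall i : 'I_n, (0 < i)%N -> S (xp i)) -> forall f, Rgen (gensB F) f -> S f.
Proof.
move=> SXinv Sxp; apply: Rgen_min => // x; rewrite !mem_cat.
by case/or3P => [/mapP[i _ ->] | /mem_enum_filterP[i /eqP i_0 ->] |
                 /mem_enum_filterP[i i_gt0 ->]]; auto.
Qed.

Lemma gensC_min : (forall i : 'I_n, (0 < i)%N -> S (xp i)) ->
  forall f, Rgen (gensC F) f -> S f.
Proof.
move=> Sxp; apply: Rgen_min => // x; rewrite mem_cat.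
by case/orP => [/mapP[i _ ->] | /mem_enum_filterP[i i_gt0 ->]]; auto.
Qed.

End Generators.

Lemma Rgen_gensC_gensA (n : nat) (R : idomainType) (F : 'I_n -> {mpoly R[n]}) f :
  Rgen (gensC F) f -> Rgen (gensA n R) f.
Proof.
have clA := Rgen_Rclosed (gensA n R).
apply: gensC_min => // [|i i_gt0]; first exact: Rgen_gensA_X.
apply: RclosedM => //; last exact: Rgen_gensA_Xinv.
by apply: Rclosed_tofrac => //; apply: Rgen_gensA_X.
Qed.

Lemma Rgen_gensC_gensB (n : nat) (R : idomainType) (F : 'I_n -> {mpoly R[n]}) f :
  Rgen (gensC F) f -> Rgen (gensB F) f.
Proof.
apply: gensC_min; [exact: Rgen_Rclosed | exact: Rgen_gensB_X | exact: Rgen_gensB_xprime].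
Qed.

Section LexOrder.
Variable n : nat.
Implicit Types m u v k : 'X_{1..n}.

Definition lexle m m' := m = m' \/ lexlt m m'.

Lemma lexlt_irr m : ~ lexlt m m.
Proof. by case=> i [_]; rewrite ltnn. Qed.

Lemma lexlt_trans m1 m2 m3 : lexlt m1 m2 -> lexlt m2 m3 -> lexlt m1 m3.
Proof.
case=> i [eq12 lt12] [j [eq23 lt23]].
have [ij|ji|/val_inj ij] := ltngtP i j.
- exists i; split; last by rewrite -(eq23 i ij).
  by move=> l li; rewrite eq12 // eq23 //; apply: ltn_trans ij.
- exists j; split; last by rewrite (eq12 j ji).
  by move=> l lj; rewrite eq12 ?eq23 //; apply: ltn_trans ji.
- subst j; exists i; split; last exact: ltn_trans lt23.
  by move=> l li; rewrite eq12 ?eq23.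
Qed.

Lemma lexlt_neq m1 m2 : lexlt m1 m2 -> m1 != m2.
Proof. by move=> lt12; apply/eqP => eq12; subst; apply: lexlt_irr lt12. Qed.

Lemma lexlt_total m1 m2 : m1 != m2 -> lexlt m1 m2 \/ lexlt m2 m1.
Proof.
move=> ne12; have [k ne_k] : exists i, m1 i != m2 i.
  apply/existsP; apply: contraR ne12 => /existsPn eq12.
  by apply/eqP/mnmP => i; apply/eqP; rewrite -[_ == _]negbK eq12.
have [i ne_i min_i] :=
  @arg_minnP _ k (fun i : 'I_n => m1 i != m2 i) (fun i : 'I_n => val i) ne_k.
have eq_lt (j : 'I_n) : (j < i)%N -> m1 j = m2 j.
  by move=> ji; apply/eqP; apply: contraTT ji => /min_i; rewrite -leqNgt.
have [lt|gt|eq] := ltngtP (m1 i) (m2 i); last by rewrite eq eqxx in ne_i.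
  by left; exists i.
by right; exists i; split=> // j /eq_lt.
Qed.

Lemma lexle_trans m1 m2 m3 : lexle m1 m2 -> lexle m2 m3 -> lexle m1 m3.
Proof.
case=> [-> //|lt12] [<-|lt23]; right=> //; exact: lexlt_trans lt12 lt23.
Qed.

Lemma lexle_lt_trans m1 m2 m3 : lexle m1 m2 -> lexlt m2 m3 -> lexlt m1 m3.
Proof. by case=> [->|lt12] // /(lexlt_trans lt12). Qed.

Lemma lexltD2r m1 m2 k : lexlt m1 m2 -> lexlt (m1 + k)%MM (m2 + k)%MM.
Proof.
case=> i [eq12 lt12]; exists i; split; last by rewrite !mnmDE ltn_add2r.
by move=> j ji; rewrite !mnmDE eq12.
Qed.

Lemma lexleD m u k v : lexle m u -> lexle k v -> lexle (m + k)%MM (u + v)%MM.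
Proof.
move=> le_mu le_kv; apply: (@lexle_trans _ (u + k)%MM).
  by case: le_mu => [->|/lexltD2r]; [left | right].
by rewrite ![(u + _)%MM]addmC; case: le_kv => [->|/lexltD2r]; [left | right].
Qed.

Lemma lexltD m u k v :
  lexle m u -> lexle k v -> (m, k) != (u, v) -> lexlt (m + k)%MM (u + v)%MM.
Proof.
case=> [<-|lt_mu] [<-|lt_kv]; rewrite ?eqxx // => _.
- by rewrite ![(m + _)%MM]addmC; apply: lexltD2r.
- exact: lexltD2r.
apply: (@lexlt_trans _ (u + k)%MM); first exact: lexltD2r.
by rewrite ![(u + _)%MM]addmC; apply: lexltD2r.
Qed.

Lemma lexleVlt m1 m2 : lexle m1 m2 \/ lexlt m2 m1.
Proof. by have [->|/lexlt_total[]] := eqVneq m1 m2; [left; left | left; right | right]. Qed.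

Lemma lexmin_exists (A : eqType) (E : A -> 'X_{1..n}) (s : seq A) : s != [::] ->
  exists2 x, x \in s & forall y, y \in s -> lexle (E x) (E y).
Proof.
elim: s => [|a s IH] // _; have [->|/IH[x xs min_x]] := eqVneq s [::].
  by exists a => [|y]; rewrite ?mem_seq1 // => /eqP ->; left.
have [le_ax|lt_xa] := lexleVlt (E a) (E x).
  exists a; rewrite ?mem_head // => y /predU1P[->|/min_x]; first by left.
  exact: lexle_trans.
by exists x => [|y /predU1P[->|/min_x //]]; [rewrite inE xs orbT | right].
Qed.

End LexOrder.

Section LexLeading.
Variables (n : nat) (R : ringType).
Implicit Types (p q : {mpoly R[n]}) (m k : 'X_{1..n}).

Definition lexlead p m := p@_m = 1 /\ forall m', m' \in msupp p -> lexle m m'.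

Lemma lexlead_coef_lt p m m' : lexlead p m -> lexlt m' m -> p@_m' = 0.
Proof.
case=> _ min_m lt_m'm; apply/eqP; rewrite mcoeff_eq0; apply/negP => /min_m le_mm'.
exact: lexlt_irr (lexle_lt_trans le_mm' lt_m'm).
Qed.

Lemma lexleadX m : lexlead 'X_[m] m.
Proof.
by split=> [|m']; rewrite ?mcoeffX ?eqxx // msuppX mem_seq1 => /eqP ->; left.
Qed.

Lemma lexlead1 : lexlead 1 0%MM.
Proof. by rewrite -mpolyX0; apply: lexleadX. Qed.

Lemma lexleadM p q m k : lexlead p m -> lexlead q k -> lexlead (p * q) (m + k)%MM.
Proof.
move=> [p_m min_m] [q_k min_k]; split; last first.
  by move=> _ /msuppM_le/allpairsP[[u v] [up vq ->]]; apply: lexleD; auto.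
have mp : m \in msupp p by rewrite mcoeff_msupp p_m oner_eq0.
have kq : k \in msupp q by rewrite mcoeff_msupp q_k oner_eq0.
pose pq := [seq (u, v) | u <- msupp p, v <- msupp q].
have mk_in : (m, k) \in pq by apply/allpairsP; exists (m, k).
have uniq_pq : uniq pq.
  by apply: allpairs_uniq => // [[a b] [c d]].
rewrite mpolyME raddf_sum /= (bigD1_seq _ mk_in uniq_pq) /= mcoeffZ mcoeffX eqxx.
rewrite p_m q_k !mulr1 big_seq_cond big1 ?addr0 // => -[u v].
case/andP=> /allpairsP[[u' v'] [up vq [-> ->]]] ne /=.
have lt_mk : lexlt (m + k)%MM (u' + v')%MM by apply: lexltD; rewrite 1?eq_sym; auto.
by rewrite mcoeffZ mcoeffX eq_sym (negbTE (lexlt_neq lt_mk)) mulr0.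
Qed.

Lemma lexleadXn p m e : lexlead p m -> lexlead (p ^+ e) (m *+ e)%MM.
Proof.
move=> lead_p; elim: e => [|e IH]; first by rewrite expr0 mulm0n; apply: lexlead1.
by rewrite exprS mulmS; apply: lexleadM.
Qed.

Lemma lexlead_prod (I : Type) (r : seq I) (G : I -> {mpoly R[n]}) (M : I -> 'X_{1..n}) :
  (forall i, lexlead (G i) (M i)) ->
  lexlead (\prod_(i <- r) G i) (\sum_(i <- r) M i)%MM.
Proof.
move=> lead_G; elim: r => [|i r IH]; first by rewrite !big_nil; apply: lexlead1.
by rewrite !big_cons; apply: lexleadM.
Qed.

(* Polynomials with pairwise distinct lexicographic leading monomials are linearly
   independent; it suffices to look at the coefficients at the leading monomials. *)
Lemma lexlead_comb_eq0 (I : eqType) (T : I -> {mpoly R[n]}) (E : I -> 'X_{1..n})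
    (s : seq (R * I)) :
  (forall i, lexlead (T i) (E i)) -> {in [seq x.2 | x <- s] &, injective E} ->
  (forall x, x \in s -> (\sum_(y <- s) y.1 *: T y.2)@_(E x.2) = 0) ->
  \sum_(y <- s) y.1 *: T y.2 = 0.
Proof.
move=> leadT; move: {2}(size s) (leqnn (size s)) => N.
elim: N s => [|N IH] s; first by rewrite leqn0 => /nilP ->; rewrite big_nil.
move=> size_s injE coef0.
have [->|/(lexmin_exists (fun y : R * I => E y.2))[x xs min_x]] := eqVneq s [::].
  by rewrite big_nil.
pose s' := [seq y <- s | y.2 != x.2].
have splitQ : \sum_(y <- s) y.1 *: T y.2 =
    (\sum_(y <- s | y.2 == x.2) y.1) *: T x.2 + \sum_(y <- s') y.1 *: T y.2.
  rewrite (bigID (fun y => y.2 == x.2)) /= big_filter scaler_suml.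
  by congr (_ + _); apply: eq_bigr => y /eqP ->.
have coef_other y : y \in s' -> (T y.2)@_(E x.2) = 0.
  rewrite mem_filter => /andP[ne ys]; apply: lexlead_coef_lt (leadT _) _.
  case: (min_x y ys) => // eqE; case/eqP: ne; apply: injE; rewrite ?map_f //.
have coef_x : \sum_(y <- s | y.2 == x.2) y.1 = 0.
  have other0 : \sum_(y <- s') (y.1 *: T y.2)@_(E x.2) = 0.
    by rewrite big_seq big1 // => y /coef_other; rewrite mcoeffZ => ->; rewrite mulr0.
  have := coef0 x xs; rewrite splitQ mcoeffD mcoeffZ (leadT x.2).1 mulr1.
  by rewrite raddf_sum other0 addr0.
have eqQ : \sum_(y <- s) y.1 *: T y.2 = \sum_(y <- s') y.1 *: T y.2.
  by rewrite splitQ coef_x scale0r add0r.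
rewrite eqQ; apply: IH => [|u v /mapP[y + ->] /mapP[z + ->]|y].
- have x_in : (0 < count (fun y => y.2 == x.2) s)%N.
    by rewrite -has_count; apply/hasP; exists x.
  rewrite size_filter -ltnS; apply: leq_trans size_s.
  by rewrite -(count_predC (fun y => y.2 == x.2)) addnC -addn1 leq_add2l.
- by rewrite !mem_filter => /andP[_ ys] /andP[_ zs]; apply: injE; rewrite map_f.
- by rewrite -eqQ mem_filter => /andP[_ /coef0].
Qed.

End LexLeading.

Lemma lexfirst_lexlead (n : nat) (R : idomainType) (p : {mpoly R[n]}) m :
  lexfirst p m -> p@_m = 1 -> lexlead p m.
Proof.
case=> _ first_m; split=> // m' m'p.
by have [->|ne] := eqVneq m' m; [left | right; apply: first_m].
Qed.

Lemma mnm1_le (n : nat) (m : 'X_{1..n}) i : (0 < m i)%N -> (U_(i) <= m)%MM.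
Proof. by move=> m_i; apply/mnm_lepP => j; rewrite mnm1E; case: eqP => [<-|]. Qed.

Lemma expr_div_cancel (K : fieldType) (x y : K) a b c : x != 0 -> (b <= c)%N ->
  x ^+ a * (y / x) ^+ b * x ^+ c = x ^+ (a + c - b) * y ^+ b.
Proof.
move=> x_neq0 le_bc; rewrite -addnBA // -{1}(subnK le_bc) !exprD expr_div_n.
by field; rewrite expf_neq0.
Qed.

Section StandardMonomials.
Variables (n : nat) (R : idomainType) (F : 'I_n -> {mpoly R[n]}).
Local Notation K := (Kfield n R).
Local Notation X := (@Xf n R).
Local Notation xp := (xprime F).
Implicit Types (a b m : 'X_{1..n}).

Definition Xm m : K := ('X_[m] : {mpoly R[n]})%:F.

Lemma tofrac_mpolyX m : ('X_[m] : {mpoly R[n]})%:F = \prod_(i < n) X i ^+ m i.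
Proof. by rewrite mpolyXE_id rmorph_prod; apply: eq_bigr => i _; rewrite rmorphXn. Qed.

Lemma XmE m : Xm m = \prod_(i < n) X i ^+ m i.
Proof. exact: tofrac_mpolyX. Qed.

Lemma Xm0 : Xm 0%MM = 1.
Proof. by rewrite /Xm mpolyX0 rmorph1. Qed.

Lemma XmD m m' : Xm (m + m')%MM = Xm m * Xm m'.
Proof. by rewrite /Xm mpolyXD rmorphM. Qed.

Lemma Xm_neq0 m : Xm m != 0.
Proof.
rewrite tofrac_eq0; apply/eqP => /(congr1 (mcoeff m)).
by rewrite mcoeffX eqxx mcoeff0 => /eqP; rewrite oner_eq0.
Qed.

Lemma Xf_neq0 i : X i != 0.
Proof. exact: (Xm_neq0 U_(i)%MM). Qed.

Lemma Xf_xprime i : X i * xp i = (F i)%:F.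
Proof. by rewrite mulrC divfK ?Xf_neq0. Qed.

Definition smon a b : K := \prod_(i < n) (X i ^+ a i * xp i ^+ b i).

Lemma smonD a b a' b' : smon (a + a')%MM (b + b')%MM = smon a b * smon a' b'.
Proof. by rewrite /smon -big_split; apply: eq_bigr => i _; rewrite !mnmDE !exprD mulrACA. Qed.

Lemma smon_m0 m : smon m 0%MM = Xm m.
Proof. by rewrite XmE; apply: eq_bigr => i _; rewrite mnm0E expr0 mulr1. Qed.

Lemma smon00 : smon 0%MM 0%MM = 1.
Proof. by rewrite smon_m0 Xm0. Qed.

Lemma smon_U0 i : smon U_(i)%MM 0%MM = X i.
Proof. by rewrite smon_m0 /Xm /Xf. Qed.

Lemma smon_0U i : smon 0%MM U_(i)%MM = xp i.
Proof.
rewrite /smon (bigD1 i) //= big1 => [|j ne_ji]; rewrite !mnm0E !mnm1E ?eqxx.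
  by rewrite expr0 mul1r expr1 mulr1.
by rewrite eq_sym (negbTE ne_ji) !expr0 mulr1.
Qed.

Lemma smon_UU i : smon U_(i)%MM U_(i)%MM = (F i)%:F.
Proof.
have -> : smon U_(i) U_(i) = smon (U_(i) + 0) (0 + U_(i)) by rewrite addm0 add0m.
by rewrite smonD smon_U0 smon_0U Xf_xprime.
Qed.

Definition smon_span (P : 'X_{1..n} * 'X_{1..n} -> Prop) (g : K) :=
  exists s : seq (R * ('X_{1..n} * 'X_{1..n})),
    (forall x, x \in s -> P x.2) /\ g = \sum_(x <- s) constK n R x.1 * smon x.2.1 x.2.2.

Section Span.
Variable P : 'X_{1..n} * 'X_{1..n} -> Prop.

Lemma smon_span0 : smon_span P 0.
Proof. by exists [::]; rewrite big_nil. Qed.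

Lemma smon_spanD g h : smon_span P g -> smon_span P h -> smon_span P (g + h).
Proof.
move=> [s [Ps ->]] [s' [Ps' ->]]; exists (s ++ s'); rewrite big_cat.
by split=> // x; rewrite mem_cat => /orP[/Ps|/Ps'].
Qed.

Lemma smon_spanZ c g : smon_span P g -> smon_span P (constK n R c * g).
Proof.
move=> [s [Ps ->]]; exists [seq (c * x.1, x.2) | x <- s]; split.
  by move=> _ /mapP[x xs ->]; apply: Ps xs.
by rewrite big_map mulr_sumr; apply: eq_bigr => x _; rewrite rmorphM mulrA.
Qed.

Lemma smon_span_smon a b : P (a, b) -> smon_span P (smon a b).
Proof.
move=> Pab; exists [:: (1, (a, b))]; rewrite big_seq1 rmorph1 mul1r.
by split=> // x; rewrite mem_seq1 => /eqP ->.
Qed.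

Lemma smon_span_sum (I : eqType) (r : seq I) (G : I -> K) :
  (forall i, i \in r -> smon_span P (G i)) -> smon_span P (\sum_(i <- r) G i).
Proof.
move=> PG; rewrite big_seq; apply: (big_ind (smon_span P)) => //.
  exact: smon_span0.
exact: smon_spanD.
Qed.

Hypothesis P00 : P (0%MM, 0%MM).
Hypothesis PD : forall a b a' b', P (a, b) -> P (a', b') -> P ((a + a')%MM, (b + b')%MM).

Lemma smon_spanM g h : smon_span P g -> smon_span P h -> smon_span P (g * h).
Proof.
move=> [s [Ps ->]] [s' [Ps' ->]].
exists [seq (x.1 * y.1, ((x.2.1 + y.2.1)%MM, (x.2.2 + y.2.2)%MM)) | x <- s, y <- s'].
split=> [_ /allpairsP[[x y] [xs ys ->]] /=|].
  by move: xs ys; case: x => ? [? ?]; case: y => ? [? ?] /Ps + /Ps'; apply: PD.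
rewrite big_allpairs_dep mulr_suml; apply: eq_bigr => x _.
by rewrite mulr_sumr; apply: eq_bigr => y _ /=; rewrite smonD rmorphM; ring.
Qed.

Lemma smon_span_Rclosed : Rclosed (smon_span P).
Proof.
split; [move=> c | exact: smon_spanD | exact: smon_spanM].
by rewrite -[constK n R c]mulr1 -smon00; apply/smon_spanZ/smon_span_smon.
Qed.

End Span.
End StandardMonomials.

Lemma mcoeff_XiM_eq0 (n : nat) (R : ringType) (p : {mpoly R[n]}) (i : 'I_n)
    (m : 'X_{1..n}) :
  m i = 0%N -> ('X_i * p)@_m = 0.
Proof.
move=> m_i; rewrite -(commr_mpolyX U_(i) p); apply/eqP; rewrite mcoeff_eq0.
rewrite (perm_mem (msuppMX p U_(i))); apply/mapP => -[m' _ m_eq].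
by move: m_i; rewrite m_eq mnmDE mnm1E eqxx.
Qed.

Section Intersection.
Variables (n : nat) (R : idomainType) (F : 'I_n -> {mpoly R[n]}) (i0 : 'I_n).
Hypothesis i0_0 : val i0 = 0%N.
Local Notation K := (Kfield n R).
Local Notation X := (@Xf n R).
Local Notation xp := (xprime F).
Local Notation cK := (constK n R).
Local Notation RC := (Rgen (gensC F)).
Implicit Types (a b m : 'X_{1..n}).

Lemma lt0n_neq_i0 (i : 'I_n) : (0 < i)%N = (i != i0).
Proof. by rewrite lt0n -val_eqE i0_0. Qed.

Definition standard (ab : 'X_{1..n} * 'X_{1..n}) :=
  ab.2 i0 = 0%N /\ forall i, ab.1 i = 0%N \/ ab.2 i = 0%N.

Lemma Rgen_gensC_smon a b : b i0 = 0%N -> RC (smon F a b).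
Proof.
move=> b_i0; have clC := Rgen_Rclosed (gensC F).
apply: Rclosed_prod => // i _; apply: RclosedM => //.
  by apply: RclosedX => //; apply: Rgen_gensC_X.
have [->|ne_i] := eqVneq i i0; first by rewrite b_i0 expr0; apply: Rclosed1.
by apply: RclosedX => //; apply: Rgen_gensC_xprime; rewrite lt0n_neq_i0.
Qed.

Lemma Rgen_gensC_span g : RC g -> smon_span F (fun ab => ab.2 i0 = 0%N) g.
Proof.
apply: gensC_min => [|i|i].
- by apply: smon_span_Rclosed => [|a b a' b' /=]; rewrite ?mnmDE ?mnm0E // => -> ->.
- by rewrite -(smon_U0 F); apply: smon_span_smon; rewrite /= mnm0E.
- rewrite lt0n_neq_i0 -(smon_0U F) => ne_i; apply: smon_span_smon.
  by rewrite /= mnm1E (negbTE ne_i).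
Qed.

Lemma smon_span_standard a b : b i0 = 0%N -> smon_span F standard (smon F a b).
Proof.
move: {2}(mdeg b).+1 (ltnSn (mdeg b)) => d.
elim: d a b => [//|d IH] a b deg_b b_i0.
have [/existsP[i /andP[a_i b_i]]|/existsPn disj_ab] :=
  boolP [exists i, (0 < a i) && (0 < b i)]%N; last first.
  apply: smon_span_smon; split=> // i; move: (disj_ab i).
  by rewrite negb_and -!leqNgt !leqn0 => /orP[] /eqP; [left | right].
move: deg_b b_i0; rewrite -(submK (mnm1_le a_i)) -(submK (mnm1_le b_i)).
set a1 := (a - _)%MM; set b1 := (b - _)%MM.
rewrite mdegD mdeg1 addn1 ltnS mnmDE => deg_b1 /eqP; rewrite addn_eq0 => /andP[/eqP b1_i0 _].
rewrite smonD smon_UU tofrac_mpolyE mulr_sumr; apply: smon_span_sum => m _.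
by rewrite mulrCA -XmE -(smon_m0 F) -smonD addm0; apply/smon_spanZ/IH.
Qed.

Lemma smon_span_x0free_standard g :
  smon_span F (fun ab => ab.2 i0 = 0%N) g -> smon_span F standard g.
Proof.
move=> [s [s_x0 ->]]; apply: smon_span_sum => x xs.
exact/smon_spanZ/smon_span_standard/s_x0.
Qed.

Definition laurentA (f : K) :=
  exists (h : {mpoly R[n]}) (m : 'X_{1..n}), m i0 = 0%N /\ f = h%:F / Xm R m.

Lemma laurentA_Rclosed : Rclosed laurentA.
Proof.
split=> [c|_ _ [h [m [m_i0 ->]]] [h' [m' [m'_i0 ->]]]|
         _ _ [h [m [m_i0 ->]]] [h' [m' [m'_i0 ->]]]].
- by exists c%:MP, 0%MM; rewrite mnm0E Xm0 divr1.
- exists (h * 'X_[m'] + h' * 'X_[m]), (m + m')%MM; rewrite mnmDE m_i0 m'_i0.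
  by rewrite XmD addf_div ?Xm_neq0 // !rmorphD !rmorphM.
- exists (h * h'), (m + m')%MM; rewrite mnmDE m_i0 m'_i0.
  by rewrite XmD mulf_div rmorphM.
Qed.

Lemma laurentA_tofrac (p : {mpoly R[n]}) : laurentA p%:F.
Proof. by exists p, 0%MM; rewrite mnm0E Xm0 divr1. Qed.

Lemma laurentA_Xinv (i : 'I_n) : i != i0 -> laurentA (X i)^-1.
Proof.
by move=> ne_i; exists 1, U_(i)%MM; rewrite mnm1E (negbTE ne_i) rmorph1 div1r.
Qed.

Lemma Rgen_gensA_laurentA f : Rgen (gensA n R) f -> laurentA f.
Proof.
apply: gensA_min => [||i]; [exact: laurentA_Rclosed | move=> i; apply: laurentA_tofrac |].
by rewrite lt0n_neq_i0; apply: laurentA_Xinv.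
Qed.

Lemma Rgen_gensC_laurentA f : RC f -> laurentA f.
Proof.
apply: gensC_min => [||i]; [exact: laurentA_Rclosed | move=> i; apply: laurentA_tofrac |].
rewrite lt0n_neq_i0 => ne_i; apply: (RclosedM laurentA_Rclosed).
  exact: laurentA_tofrac.
exact: laurentA_Xinv.
Qed.

Definition laurentB (f : K) := exists (k : nat) (g : K), RC g /\ f = g / X i0 ^+ k.

Lemma laurentB_Rclosed : Rclosed laurentB.
Proof.
have clC := Rgen_Rclosed (gensC F).
have RC_Xi0 k : RC (X i0 ^+ k) by apply: RclosedX => //; apply: Rgen_gensC_X.
split=> [c|_ _ [k [g [Cg ->]]] [k' [g' [Cg' ->]]]|_ _ [k [g [Cg ->]]] [k' [g' [Cg' ->]]]].
- by exists 0%N, (cK c); rewrite expr0 divr1; split=> //; apply: Rclosed_const.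
- exists (k + k')%N, (g * X i0 ^+ k' + g' * X i0 ^+ k); split.
    by apply: RclosedD => //; apply: RclosedM.
  by rewrite addf_div ?expf_neq0 ?Xf_neq0 // exprD.
- exists (k + k')%N, (g * g'); split; first exact: RclosedM.
  by rewrite mulf_div exprD.
Qed.

Lemma Rgen_gensB_laurentB f : Rgen (gensB F) f -> laurentB f.
Proof.
apply: gensB_min => [|i|i i_0|i i_gt0]; first exact: laurentB_Rclosed.
- by exists 0%N, (X i); rewrite expr0 divr1; split=> //; apply: Rgen_gensC_X.
- have -> : i = i0 by apply: val_inj; rewrite /= i_0 i0_0.
  exists 1%N, 1; rewrite expr1 div1r; split=> //.
  exact: (Rclosed1 (Rgen_Rclosed _)).
- by exists 0%N, (xp i); rewrite expr0 divr1; split=> //; apply: Rgen_gensC_xprime.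
Qed.

Section LeadingMonomials.
Variable M : 'I_n -> 'X_{1..n}.
Hypothesis leadF : forall i, lexlead (F i) (M i).
Hypothesis M_upper : forall i j : 'I_n, (j <= i)%N -> M i j = 0%N.

Section Numerators.
Variable beta : 'X_{1..n}.

Definition smon_numer a b : {mpoly R[n]} :=
  'X_[a + beta - b] * \prod_(i < n) F i ^+ b i.

Definition smon_numer_lead a b : 'X_{1..n} :=
  (a + beta - b + \sum_(i < n) M i *+ b i)%MM.

Lemma smon_mulXm a b : (forall i, b i <= beta i)%N ->
  smon F a b * Xm R beta = (smon_numer a b)%:F.
Proof.
move=> b_le; rewrite XmE /smon /smon_numer -big_split tofracM tofrac_mpolyX rmorph_prod.
rewrite -big_split; apply: eq_bigr => i _ /=.
by rewrite rmorphXn mnmBE mnmDE expr_div_cancel ?Xf_neq0.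
Qed.

Lemma lexlead_smon_numer a b : lexlead (smon_numer a b) (smon_numer_lead a b).
Proof. by apply/lexleadM/lexlead_prod => [|i]; [apply: lexleadX | apply: lexleadXn]. Qed.

Lemma smon_numer_lead_i0 a b :
  beta i0 = 0%N -> a i0 = 0%N -> b i0 = 0%N -> smon_numer_lead a b i0 = 0%N.
Proof.
move=> beta_i0 a_i0 b_i0; rewrite mnmDE mnmBE mnmDE beta_i0 a_i0 b_i0 mnm_sumE.
by rewrite big1 // => i _; rewrite mulmnE M_upper ?i0_0.
Qed.

(* Triangularity of [M] recovers [a] and [b] coordinate by coordinate. *)
Lemma smon_numer_lead_inj a b a' b' :
  (forall i, a i = 0 \/ b i = 0)%N -> (forall i, b i <= beta i)%N ->
  (forall i, a' i = 0 \/ b' i = 0)%N -> (forall i, b' i <= beta i)%N ->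
  smon_numer_lead a b = smon_numer_lead a' b' -> a = a' /\ b = b'.
Proof.
move=> disj_ab b_le disj_ab' b'_le eq_lead.
have coord (j : 'I_n) : (forall i : 'I_n, (i < j)%N -> b i = b' i) -> a j = a' j /\ b j = b' j.
  move=> eq_before; have := congr1 (fun m : 'X_{1..n} => m j) eq_lead.
  rewrite !mnmDE !mnmBE !mnmDE !mnm_sumE.
  rewrite (eq_bigr (fun i => (M i *+ b' i)%MM j)) => [|i _]; last first.
    by rewrite !mulmnE; have [/M_upper ->|/eq_before ->] := leqP j i; rewrite ?muln0.
  move/eqP; rewrite eqn_add2r => /eqP.
  by have := disj_ab j; have := disj_ab' j; have := b_le j; have := b'_le j; lia.
suff eq_below k (j : 'I_n) : (j < k)%N -> a j = a' j /\ b j = b' j.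
  by split; apply/mnmP => j; case: (eq_below n j (ltn_ord j)).
elim: k j => [//|k IH] j j_le; apply: coord => i ij.
by case: (IH i (leq_trans ij j_le)).
Qed.

End Numerators.

Lemma smon_comb_eq0 (s : seq (R * ('X_{1..n} * 'X_{1..n}))) :
  (forall x, x \in s -> standard x.2 /\ x.2.1 i0 = 0%N) ->
  laurentA ((\sum_(x <- s) cK x.1 * smon F x.2.1 x.2.2) / X i0) ->
  \sum_(x <- s) cK x.1 * smon F x.2.1 x.2.2 = 0.
Proof.
set g := \sum_(x <- s) _ => std_s [h [m [m_i0 g_eq]]].
pose beta := (\sum_(x <- s) x.2.2)%MM.
have b_le x : x \in s -> forall i, (x.2.2 i <= beta i)%N.
  by move=> xs i; rewrite /beta mnm_sumE (big_rem x) ?leq_addr.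
have beta_i0 : beta i0 = 0%N.
  by rewrite /beta mnm_sumE big_seq big1 // => x /std_s[[]].
pose Q := \sum_(x <- s) x.1 *: smon_numer beta x.2.1 x.2.2.
have gQ : g * Xm R beta = Q%:F.
  rewrite /g mulr_suml rmorph_sum big_seq [RHS]big_seq; apply: eq_bigr => x xs.
  rewrite -mulrA smon_mulXm; last exact: b_le.
  by rewrite -(mul_mpolyC x.1) [RHS]rmorphM.
have QX : Q * 'X_[m] = 'X_i0 * (h * 'X_[beta]).
  apply/eqP; rewrite -tofrac_eq !tofracM -gQ -/(Xm R m) -/(Xm R beta) -/(X i0).
  have -> : g = h%:F / Xm R m * X i0 by rewrite -g_eq divfK ?Xf_neq0.
  by apply/eqP; rewrite mulrAC [_ / _ * _]mulrAC divfK ?Xm_neq0 // -mulrA mulrCA.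
have Q_x0 m' : m' i0 = 0%N -> Q@_m' = 0.
  by move=> m'_i0; rewrite -(mcoeffMX _ m) QX mcoeff_XiM_eq0 // mnmDE m_i0 m'_i0.
have Q0 : Q = 0.
  apply: (@lexlead_comb_eq0 _ _ _ (fun ab => smon_numer beta ab.1 ab.2)
                                  (fun ab => smon_numer_lead beta ab.1 ab.2)).
  - by move=> ab; apply: lexlead_smon_numer.
  - move=> _ _ /mapP[x xs ->] /mapP[y ys ->].
    have [[_ disj_x] _] := std_s x xs; have [[_ disj_y] _] := std_s y ys.
    case/(smon_numer_lead_inj disj_x (b_le x xs) disj_y (b_le y ys)) => eq1 eq2.
    by rewrite [x.2]surjective_pairing [y.2]surjective_pairing eq1 eq2.
  - move=> x xs; have [[b_i0 _] a_i0] := std_s x xs.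
    exact/Q_x0/smon_numer_lead_i0.
apply/eqP; move: gQ; rewrite Q0 rmorph0 => /eqP.
by rewrite mulf_eq0 (negbTE (Xm_neq0 R beta)) orbF.
Qed.

Lemma Rgen_gensC_divX0 g : RC g -> laurentA (g / X i0) -> RC (g / X i0).
Proof.
move=> /Rgen_gensC_span/smon_span_x0free_standard[s [std_s ->]].
have clC := Rgen_Rclosed (gensC F).
pose P0 (x : R * ('X_{1..n} * 'X_{1..n})) := (0 < x.2.1 i0)%N.
rewrite (bigID P0) /= mulrDl; set g1 := \sum_(x <- s | P0 x) _; set g0 := \sum_(x <- s | _) _.
have C_g1 : RC (g1 / X i0).
  rewrite /g1 big_seq_cond mulr_suml; apply: Rclosed_sum => // x /andP[xs a_i0].
  have [[b_i0 _]] := std_s x xs.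
  have -> : smon F x.2.1 x.2.2 = smon F (x.2.1 - U_(i0)) x.2.2 * X i0.
    by rewrite -(smon_U0 F) -smonD addm0 submK ?mnm1_le.
  rewrite mulrA mulfK ?Xf_neq0 //; apply: RclosedM => //; first exact: Rclosed_const.
  exact: Rgen_gensC_smon.
move=> A_g; suff -> : g0 = 0 by rewrite mul0r addr0.
rewrite /g0 -big_filter; apply: smon_comb_eq0 => [x|].
  by rewrite mem_filter /P0 -leqNgt leqn0 => /andP[/eqP a_i0 /std_s].
have clA := laurentA_Rclosed.
rewrite big_filter -[g0 / X i0](addKr (g1 / X i0)).
by apply: RclosedD => //; apply: RclosedN => //; apply: Rgen_gensC_laurentA.
Qed.

Lemma Rgen_gensAB_gensC f : Rgen (gensA n R) f -> Rgen (gensB F) f -> RC f.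
Proof.
move=> /Rgen_gensA_laurentA A_f /Rgen_gensB_laurentB[k [g [C_g f_eq]]].
rewrite {f}f_eq in A_f *; elim: k g C_g A_f => [|k IH] g C_g A_f.
  by rewrite expr0 divr1.
have X0k_neq0 : X i0 ^+ k != 0 by rewrite expf_neq0 ?Xf_neq0.
move: A_f; rewrite exprS invfM mulrA => A_f; apply: IH => //.
apply: Rgen_gensC_divX0 => //; rewrite -(mulfVK X0k_neq0 (g / X i0)).
apply: (RclosedM laurentA_Rclosed) => //.
exact/(RclosedX laurentA_Rclosed)/(laurentA_tofrac 'X_i0).
Qed.

End LeadingMonomials.
End Intersection.

Theorem lemma4p20 (R : idomainType) (n : nat) (F : 'I_n -> {mpoly R[n]}) :
  UFD R ->
  (forall k : nat, (k%:R : R) = 0 -> k = 0%N) ->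
  (2 <= n)%N ->
  LPseed F ->
  Condition12 F ->
  forall f : {fraction {mpoly R[n]}},
    (Rgen (gensA n R) f /\ Rgen (gensB F) f) <-> Rgen (gensC F) f.
Proof.
move=> _ _ n_ge2 _ cond f.
pose i0 : 'I_n := Ordinal (ltnW n_ge2).
have /fin_all_exists2[M leadF M_upper] : forall i : 'I_n,
    exists2 m, lexlead (F i) m & forall j : 'I_n, (j <= i)%N -> m j = 0%N.
  move=> i; have [_ [m m_first [m_coef m_upper]] _ _] := cond i.
  by exists m => //; apply: lexfirst_lexlead.
split=> [[A_f B_f]|C_f].
  exact: (@Rgen_gensAB_gensC _ _ _ i0 erefl M leadF M_upper).
by split; [apply: Rgen_gensC_gensA C_f | apply: Rgen_gensC_gensB].
Qed.
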